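(* Let $S$ be a nondegenerate simplex in $\mathbb R^n$ with $S\subset Q_n\subset nS$, with vertices $x^{(1)},\dots,x^{(n+1)}$, and let $\lambda_j(x)=l_{1j}x_1+\dots+l_{nj}x_n+l_{n+1,j}$ ($1\le j\le n+1$) be its basic Lagrange polynomials. Then: (i) $\max_{x\in\mathrm{ver}(Q_n)}\lambda_j(x)=1$ for all $j=1,\dots,n+1$; (ii) $\max_{x\in\mathrm{ver}(Q_n)}(-\lambda_j(x))=\frac{n-1}{n+1}$ for all $j=1,\dots,n+1$; (iii) the same equalities as in (i) and (ii) hold with maxima taken over $x\in Q_n$; (iv) $c(S)=c(Q_n)=(\tfrac12,\dots,\tfrac12)$; (v) for every integer $k\ge0$, $\frac{1}{n^{k+1}}Q_n\subset\frac1{n^k}S\subset\frac1{n^k}Q_n$ and $n^kS\subset n^kQ_n\subset n^{k+1}S$, i.e. $\dots\subset\frac1{n^2}S\subset\frac1nQ_n\subset S\subset Q_n\subset nS\subset n^2Q_n\subset n^3S\subset\dots$; (vi) $\sum_{j=1}^{n+1}|l_{ij}|=2$ for $1\le i\le n$, and $\sum_{i=1}^{n}|l_{ij}|=\frac{2n}{n+1}$ for $1\le j\le n+1$; (vii) for $1\le j\le n+1$: $\sum_{i\le n,\ l_{ij}\ge0}l_{ij}=1-l_{n+1,j}$ and $\sum_{i\le n,\ l_{ij}<0}|l_{ij}|=\frac{n-1}{n+1}+l_{n+1,j}$; (viii) $Q_n\subset\bigcap_{j=1}^{n+1}D_j$, where $D_j=\{x\in\mathbb R^n: -\frac{n-1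}{n+1}\le\lambda_j(x)\le1\}$.
   Context: $Q_n=[0,1]^n$. For a convex body $\Omega$ and $\sigma>0$, $\sigma\Omega$ denotes the homothetic image of $\Omega$ with center at the center of gravity $c(\Omega)$ of $\Omega$ and ratio $\sigma$. For a nondegenerate simplex $S$ with vertices $x^{(j)}=(x^{(j)}_1,\dots,x^{(j)}_n)$, $1\le j\le n+1$, the vertex matrix $A$ is the $(n+1)\times(n+1)$ matrix whose $j$th row is $(x^{(j)}_1,\dots,x^{(j)}_n,1)$; writing $A^{-1}=(l_{ij})$, the basic Lagrange polynomials are $\lambda_j(x)=l_{1j}x_1+\dots+l_{nj}x_n+l_{n+1,j}$; they satisfy $\lambda_j(x^{(k)})=\delta_{jk}$. *)

(* Points of R^n are row vectors 'rV[R]_n; coordinate i of x is x 0 i. *)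
From HB Require Import structures.
From mathcomp Require Import all_boot all_order all_algebra.
Set Implicit Arguments. Unset Strict Implicit. Unset Printing Implicit Defensive.
Import Order.TTheory GRing.Theory Num.Theory.
Local Open Scope ring_scope.

Section Defs.
Variable R : realFieldType.
Variable n : nat.

Definition pset := 'rV[R]_n -> Prop.
Definition psubset (A B : pset) : Prop := forall x, A x -> B x.

Definition cube : pset := fun x => forall i : 'I_n, 0 <= x 0 i <= 1.
Definition cube_vertex : pset := fun x => forall i : 'I_n, x 0 i = 0 \/ x 0 i = 1.

Definition simplex (V : 'M[R]_(n.+1, n)) : pset :=
  fun x => exists b : 'I_n.+1 -> R,
    [/\ forall j, 0 <= b j, \sum_j b j = 1 & x = \sum_j b j *: row j V].

(* vertex matrix A: j-th row is (x^(j)_1, ..., x^(j)_n, 1) *)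
Definition vertex_matrix (V : 'M[R]_(n.+1, n)) : 'M[R]_(n.+1) :=
  \matrix_(j, k) (if unlift ord_max k is Some i then V j i else 1).

(* l_{ij} = (A^{-1})_{ij}; coefficient rows i = 1..n are lift ord_max i, row n+1 is ord_max *)
Definition lcoef (V : 'M[R]_(n.+1, n)) : 'M[R]_(n.+1) := invmx (vertex_matrix V).

Definition lagr (V : 'M[R]_(n.+1, n)) (j : 'I_n.+1) (x : 'rV[R]_n) : R :=
  \sum_(i < n) lcoef V (lift ord_max i) j * x 0 i + lcoef V ord_max j.

Definition simplex_center (V : 'M[R]_(n.+1, n)) : 'rV[R]_n :=
  (n.+1%:R)^-1 *: \sum_j row j V.
Definition cube_center : 'rV[R]_n := const_mx (2^-1).

Definition homot (c : 'rV[R]_n) (s : R) (Om : pset) : pset :=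
  fun x => exists2 y, Om y & x = c + s *: (y - c).

Definition is_max (A : pset) (f : 'rV[R]_n -> R) (m : R) : Prop :=
  (exists2 x, A x & f x = m) /\ (forall x, A x -> f x <= m).
End Defs.

(* Write l_ij for the entries of the inverse of the vertex matrix, so that
   λ_j(x) = Σ_i l_ij x_i + l_{n+1,j}.  Over the cube, λ_j is maximal (resp.
   minimal) at the vertex selecting the coordinates with l_ij >= 0 (resp.
   l_ij < 0); these extreme values are M_j = l_{n+1,j} + Σ_i l_ij⁺ and
   m_j = l_{n+1,j} - Σ_i l_ij⁻.  The hypotheses then force every inequality
   in the following counting argument to be an equality:
   - row sums: Σ_j l_ij = 0, hence Σ_j l_ij⁺ = Σ_j l_ij⁻, and Σ_j l_ij⁺ >= 1
     because Σ_j l_ij x^(j)_i = 1 with x^(j) in the cube (S ⊂ Q_n);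
   - m_j >= -(n-1)/(n+1) since every point of Q_n is c(S) + n(y - c(S)) with
     y ∈ S (Q_n ⊂ nS), and M_j >= 1 since x^(j) ∈ Q_n;
   - the total positive mass T = Σ_ij l_ij⁺ satisfies n <= T, while
     Σ_j m_j = 1 - T and Σ_j M_j = 1 + T; squeezing gives T = n, M_j = 1,
     m_j = -(n-1)/(n+1) and Σ_j l_ij⁺ = Σ_j l_ij⁻ = 1.
   Everything in the theorem is a direct consequence: (i)-(iii), (vi)-(viii)
   read off these values, λ_j(1/2,...,1/2) = (M_j + m_j)/2 = 1/(n+1) gives
   c(S) = (1/2,...,1/2) (iv), and (v) follows by composing homotheties. *)

From HB Require Import structures.
From mathcomp Require Import all_boot all_order all_algebra.
From mathcomp Require Import ring lra.
Import Order.TTheory GRing.Theory Num.Theory.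
Local Open Scope ring_scope.
Set Implicit Arguments. Unset Strict Implicit.

Lemma sum_squeeze (R : numDomainType) (I : finType) (F G : I -> R) :
  (forall i, F i <= G i) -> \sum_i G i <= \sum_i F i -> forall i, F i = G i.
Proof.
move=> leFG leGF i.
have GF_ge0 : forall k, true -> 0 <= G k - F k by move=> k _; rewrite subr_ge0.
have sum0 : \sum_k (G k - F k) = 0.
  apply/eqP; rewrite eq_le sumr_ge0 // andbT sumrB subr_le0 //.
by apply/eqP; rewrite eq_sym -subr_eq0; apply/eqP; exact: psumr_eq0P sum0 i _.
Qed.

Section PosNegParts.
Variable R : realFieldType.

Definition pos_part (r : R) : R := if 0 <= r then r else 0.
Definition neg_part (r : R) : R := if r < 0 then - r else 0.

Lemma pos_negE (r : R) : r = pos_part r - neg_part r.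
Proof. by rewrite /pos_part /neg_part; case: ifP => h; case: ifP => h'; lra. Qed.

Lemma abs_pos_neg (r : R) : `|r| = pos_part r + neg_part r.
Proof.
by rewrite /pos_part /neg_part; case: lerP => h;
  [rewrite ger0_norm // | rewrite ltr0_norm //]; lra.
Qed.

Lemma mul_le_pos_part (r x : R) : 0 <= x <= 1 -> r * x <= pos_part r.
Proof. by move=> /andP[x_ge0 x_le1]; rewrite /pos_part; case: ifP => h; nra. Qed.

Lemma neg_part_le_mul (r x : R) : 0 <= x <= 1 -> - neg_part r <= r * x.
Proof. by move=> /andP[x_ge0 x_le1]; rewrite /neg_part; case: ifP => h; nra. Qed.

End PosNegParts.

Section Homothety.
Variables (R : realFieldType) (n : nat) (c : 'rV[R]_n).

Lemma homot_sub (s : R) (A B : pset R n) :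
  psubset A B -> psubset (homot c s A) (homot c s B).
Proof. by move=> AB x [y /AB By ->]; exists y. Qed.

Lemma homot_sub_comp (s t : R) (A B : pset R n) :
  psubset A (homot c t B) -> psubset (homot c s A) (homot c (s * t) B).
Proof.
move=> AtB x [y /AtB [z Bz ->] ->]; exists z => //.
by rewrite (addrC c (t *: _)) addrK scalerA.
Qed.

End Homothety.

Section LagrangeBasis.
Variables (R : realFieldType) (n : nat) (V : 'M[R]_(n.+1, n)).

Lemma lagr_affine_comb j (w : 'I_n.+1 -> R) : \sum_k w k = 1 ->
  lagr V j (\sum_k w k *: row k V) = \sum_k w k * lagr V j (row k V).
Proof.
move=> w_sum1; rewrite /lagr.
under [RHS]eq_bigr do rewrite mulrDr mulr_sumr.
rewrite big_split /= -mulr_suml w_sum1 mul1r exchange_big /=.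
congr (_ + _); apply: eq_bigr => i _.
rewrite summxE mulr_sumr; apply: eq_bigr => k _.
by rewrite !mxE mulrCA.
Qed.

Lemma lagr_homot j (c : 'rV[R]_n) t y :
  lagr V j (c + t *: (y - c)) = lagr V j c + t * (lagr V j y - lagr V j c).
Proof.
rewrite /lagr.
set a := fun i => lcoef V (lift ord_max i) j.
have -> : \sum_(i < n) a i * (c + t *: (y - c)) 0 i =
    \sum_(i < n) a i * c 0 i +
    t * (\sum_(i < n) a i * y 0 i - \sum_(i < n) a i * c 0 i).
  rewrite -sumrB mulr_sumr -big_split /=; apply: eq_bigr => i _.
  by rewrite !mxE; ring.
ring.
Qed.

Hypothesis V_unit : vertex_matrix V \in unitmx.

Lemma lcoef_mul_vertex r k :
  \sum_j lcoef V r j * vertex_matrix V j k = (r == k)%:R.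
Proof. by have := congr1 (fun M : 'M[R]_n.+1 => M r k) (mulVmx V_unit); rewrite !mxE. Qed.

Lemma vertex_mul_lcoef r k :
  \sum_j vertex_matrix V r j * lcoef V j k = (r == k)%:R.
Proof. by have := congr1 (fun M : 'M[R]_n.+1 => M r k) (mulmxV V_unit); rewrite !mxE. Qed.

Lemma lcoef_row_sum (i : 'I_n) : \sum_j lcoef V (lift ord_max i) j = 0.
Proof.
have := lcoef_mul_vertex (lift ord_max i) ord_max.
rewrite eq_sym (negbTE (neq_lift _ _)) mulr0n => E.
rewrite -[X in _ = X]E.
by apply: eq_bigr => j _; rewrite mxE unlift_none mulr1.
Qed.

Lemma lcoef_last_sum : \sum_j lcoef V ord_max j = 1.
Proof.
have := lcoef_mul_vertex ord_max ord_max; rewrite eqxx mulr1n => E.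
rewrite -[X in _ = X]E.
by apply: eq_bigr => j _; rewrite mxE unlift_none mulr1.
Qed.

Lemma lcoef_row_coord (i i' : 'I_n) :
  \sum_j lcoef V (lift ord_max i) j * V j i' = (i == i')%:R.
Proof.
rewrite -(inj_eq (@lift_inj _ ord_max)) -lcoef_mul_vertex.
by apply: eq_bigr => j _; rewrite mxE liftK.
Qed.

Lemma lcoef_last_coord (i : 'I_n) : \sum_j lcoef V ord_max j * V j i = 0.
Proof.
have := lcoef_mul_vertex ord_max (lift ord_max i).
rewrite (negbTE (neq_lift _ _)) mulr0n => E.
rewrite -[X in _ = X]E.
by apply: eq_bigr => j _; rewrite mxE liftK.
Qed.

Lemma lagr_vertex j k : lagr V j (row k V) = (k == j)%:R.
Proof.
rewrite -vertex_mul_lcoef big_ord_recr /= /lagr mxE unlift_none mul1r.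
congr (_ + _); apply: eq_bigr => i _.
have -> : widen_ord (leqnSn n) i = lift ord_max i.
  by apply: val_inj; rewrite /= /bump leqNgt ltn_ord.
by rewrite !mxE liftK mulrC.
Qed.

Lemma lagr_decomp x : x = \sum_j lagr V j x *: row j V.
Proof.
apply/rowP => i; rewrite summxE.
under eq_bigr do rewrite !mxE /lagr mulrDl mulr_suml.
rewrite big_split /= lcoef_last_coord addr0 exchange_big /=.
rewrite (bigD1 i) //= [X in _ + X]big1 ?addr0.
  have := lcoef_row_coord i i; rewrite eqxx mulr1n => coord_ii.
  rewrite -[LHS]mulr1 -[X in _ * X = _]coord_ii mulr_sumr.
  by apply: eq_bigr => k _; ring.
move=> i' i'_neq.
have := lcoef_row_coord i' i; rewrite (negbTE i'_neq) mulr0n => coord_i'i.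
rewrite -[RHS](mulr0 (x 0 i')) -[X in _ = _ * X]coord_i'i mulr_sumr.
by apply: eq_bigr => k _; ring.
Qed.

Lemma lagr_comb_vertices j (w : 'I_n.+1 -> R) : \sum_k w k = 1 ->
  lagr V j (\sum_k w k *: row k V) = w j.
Proof.
move=> w_sum1; rewrite lagr_affine_comb // (bigD1 j) //= lagr_vertex eqxx mulr1.
by rewrite big1 ?addr0 // => k /negbTE k_neq; rewrite lagr_vertex k_neq mulr0.
Qed.

Lemma row_in_simplex k : simplex V (row k V).
Proof.
exists (fun j => (j == k)%:R); split.
- by move=> j; rewrite ler0n.
- by rewrite (bigD1 k) //= eqxx big1 ?addr0 // => j /negbTE ->.
- rewrite (bigD1 k) //= eqxx scale1r big1 ?addr0 // => j /negbTE ->.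
  by rewrite scale0r.
Qed.

Lemma simplex_lagr_ge0 x j : simplex V x -> 0 <= lagr V j x.
Proof. by move=> [w [w_ge0 w_sum1 ->]]; rewrite lagr_comb_vertices. Qed.

Lemma lagr_simplex_center j : lagr V j (simplex_center V) = (n.+1%:R)^-1.
Proof.
rewrite /simplex_center scaler_sumr lagr_comb_vertices //.
by rewrite sumr_const card_ord -[_ *+ n.+1]mulr_natr mulVf // pnatr_eq0.
Qed.

End LagrangeBasis.

Section CubeExtrema.
Variables (R : realFieldType) (n : nat) (V : 'M[R]_(n.+1, n)).

Definition cube_max_val j : R :=
  lcoef V ord_max j + \sum_(i < n) pos_part (lcoef V (lift ord_max i) j).
Definition cube_min_val j : R :=
  lcoef V ord_max j - \sum_(i < n) neg_part (lcoef V (lift ord_max i) j).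

Definition max_vertex j : 'rV[R]_n :=
  \row_i (if 0 <= lcoef V (lift ord_max i) j then 1 else 0).
Definition min_vertex j : 'rV[R]_n :=
  \row_i (if lcoef V (lift ord_max i) j < 0 then 1 else 0).

Lemma cube_vertex_cube (x : 'rV[R]_n) : cube_vertex x -> cube x.
Proof. by move=> x_vert i; case: (x_vert i) => ->; rewrite ?lexx ?ler01. Qed.

Lemma max_vertexP j : cube_vertex (max_vertex j).
Proof. by move=> i; rewrite mxE; case: ifP => _; [right|left]. Qed.

Lemma min_vertexP j : cube_vertex (min_vertex j).
Proof. by move=> i; rewrite mxE; case: ifP => _; [right|left]. Qed.

Lemma lagr_le_cube_max j x : cube x -> lagr V j x <= cube_max_val j.
Proof.
move=> x_cube; rewrite /lagr /cube_max_val addrC lerD2l.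
by apply: ler_sum => i _; exact: mul_le_pos_part.
Qed.

Lemma cube_min_le_lagr j x : cube x -> cube_min_val j <= lagr V j x.
Proof.
move=> x_cube; rewrite /lagr /cube_min_val addrC -sumrN lerD2r.
by apply: ler_sum => i _; exact: neg_part_le_mul.
Qed.

Lemma lagr_max_vertex j : lagr V j (max_vertex j) = cube_max_val j.
Proof.
rewrite /lagr /cube_max_val addrC; congr (_ + _); apply: eq_bigr => i _.
by rewrite mxE /pos_part; case: ifP => _; rewrite ?mulr1 ?mulr0.
Qed.

Lemma lagr_min_vertex j : lagr V j (min_vertex j) = cube_min_val j.
Proof.
rewrite /lagr /cube_min_val addrC -sumrN; congr (_ + _); apply: eq_bigr => i _.
by rewrite mxE /neg_part; case: ifP => _; rewrite ?mulr1 ?mulr0 ?opprK ?oppr0.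
Qed.

Lemma lagr_cube_center j :
  lagr V j (@cube_center R n) = (cube_max_val j + cube_min_val j) / 2.
Proof.
rewrite /lagr /cube_max_val /cube_min_val.
have -> : \sum_(i < n) lcoef V (lift ord_max i) j * (@cube_center R n) 0 i =
    (\sum_(i < n) pos_part (lcoef V (lift ord_max i) j) -
     \sum_(i < n) neg_part (lcoef V (lift ord_max i) j)) / 2.
  rewrite -sumrB mulr_suml; apply: eq_bigr => i _.
  by rewrite mxE -pos_negE.
by field.
Qed.

Lemma is_max_cube (f : 'rV[R]_n -> R) m x :
  cube_vertex x -> f x = m -> (forall y, cube y -> f y <= m) ->
  is_max (@cube_vertex R n) f m /\ is_max (@cube R n) f m.
Proof.
move=> x_vert fx f_le; split; split; try by exists x => //; exact: cube_vertex_cube.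
- by move=> y /cube_vertex_cube; exact: f_le.
- exact: f_le.
Qed.

End CubeExtrema.

Section InscribedSimplex.
Variables (R : realFieldType) (n : nat) (V : 'M[R]_(n.+1, n)).
Hypothesis V_unit : vertex_matrix V \in unitmx.
Hypothesis S_sub_Q : psubset (simplex V) (@cube R n).
Hypothesis Q_sub_nS :
  psubset (@cube R n) (homot (simplex_center V) n%:R (simplex V)).

Local Notation l := (lcoef V).
Local Notation q := ((n%:R - 1) / (n%:R + 1) : R).

Lemma natr1_neq0 : n%:R + 1 != 0 :> R.
Proof. by rewrite natr1 pnatr_eq0. Qed.

Lemma q_mul_succ : q * (n%:R + 1) = n%:R - 1.
Proof. by field; exact: natr1_neq0. Qed.

Definition pos_mass : R := \sum_(i < n) \sum_j pos_part (l (lift ord_max i) j).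

(* Each coefficient row has as much positive as negative mass (it sums to 0) ... *)
Lemma row_pos_eq_neg (i : 'I_n) :
  \sum_j pos_part (l (lift ord_max i) j) = \sum_j neg_part (l (lift ord_max i) j).
Proof.
apply/eqP; rewrite -subr_eq0 -sumrB; apply/eqP.
by rewrite -[RHS](lcoef_row_sum V_unit i); apply: eq_bigr => j _; rewrite -pos_negE.
Qed.

(* ... and positive mass at least 1, since Σ_j l_ij x^(j)_i = 1 with the
   vertex coordinates x^(j)_i in [0,1]. *)
Lemma row_pos_ge1 (i : 'I_n) : 1 <= \sum_j pos_part (l (lift ord_max i) j).
Proof.
have := lcoef_row_coord V_unit i i; rewrite eqxx mulr1n => <-.
apply: ler_sum => j _; apply: mul_le_pos_part.
by have := S_sub_Q (row_in_simplex V j) i; rewrite mxE.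
Qed.

Lemma pos_mass_ge : n%:R <= pos_mass.
Proof.
rewrite /pos_mass -[n in n%:R](card_ord n) -sumr_const.
by apply: ler_sum => i _; exact: row_pos_ge1.
Qed.

(* Q_n ⊂ nS: the cube minimum of λ_j, attained at a point c + n(y - c) with
   y ∈ S and λ_j(c) = 1/(n+1), is at least 1/(n+1) - n/(n+1). *)
Lemma cube_min_ge j : - q <= cube_min_val V j.
Proof.
rewrite -lagr_min_vertex.
have [y y_S ->] := Q_sub_nS (cube_vertex_cube (min_vertexP V j)).
rewrite lagr_homot lagr_simplex_center // -natr1.
have := simplex_lagr_ge0 V_unit j y_S.
have n_ge0 : 0 <= n%:R :> R by exact: ler0n.
nra.
Qed.

(* S ⊂ Q_n: the vertex x^(j), where λ_j = 1, lies in the cube. *)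
Lemma cube_max_ge1 j : 1 <= cube_max_val V j.
Proof.
have <- : lagr V j (row j V) = 1 by rewrite lagr_vertex // eqxx.
exact/lagr_le_cube_max/S_sub_Q/row_in_simplex.
Qed.

Lemma sum_cube_min : \sum_j cube_min_val V j = 1 - pos_mass.
Proof.
rewrite /cube_min_val sumrB lcoef_last_sum // /pos_mass exchange_big /=.
by congr (_ - _); apply: eq_bigr => i _; rewrite row_pos_eq_neg.
Qed.

Lemma sum_cube_max : \sum_j cube_max_val V j = 1 + pos_mass.
Proof. by rewrite /cube_max_val big_split /= lcoef_last_sum // /pos_mass exchange_big. Qed.

(* Summing cube_min_ge over j gives pos_mass <= n; hence equality. *)
Lemma sum_const_q : \sum_(j < n.+1) q = n%:R - 1.
Proof. by rewrite sumr_const card_ord -[_ *+ n.+1]mulr_natr -natr1 q_mul_succ. Qed.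

Lemma pos_mass_eq : pos_mass = n%:R.
Proof.
apply/eqP; rewrite eq_le pos_mass_ge andbT.
have : 0 <= \sum_j (cube_min_val V j + q).
  by apply: sumr_ge0 => j _; have := cube_min_ge j; lra.
rewrite big_split /= sum_cube_min sum_const_q; lra.
Qed.

Lemma cube_min_eq j : cube_min_val V j = - q.
Proof.
apply/esym; move: j; apply: sum_squeeze; first exact: cube_min_ge.
by rewrite sum_cube_min pos_mass_eq sumrN sum_const_q; lra.
Qed.

Lemma cube_max_eq1 j : cube_max_val V j = 1.
Proof.
apply/esym; move: j; apply: sum_squeeze; first exact: cube_max_ge1.
by rewrite sum_cube_max pos_mass_eq sumr_const card_ord -natr1; lra.
Qed.

Lemma row_pos_eq1 (i : 'I_n) : \sum_j pos_part (l (lift ord_max i) j) = 1.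
Proof.
apply/esym; move: i; apply: sum_squeeze; first exact: row_pos_ge1.
by rewrite -/pos_mass pos_mass_eq sumr_const card_ord.
Qed.

Lemma lagr_max j :
  is_max (@cube_vertex R n) (lagr V j) 1 /\ is_max (@cube R n) (lagr V j) 1.
Proof.
apply: (is_max_cube (max_vertexP V j)); first by rewrite lagr_max_vertex cube_max_eq1.
by move=> x /(lagr_le_cube_max V j); rewrite cube_max_eq1.
Qed.

Lemma neg_lagr_max j :
  is_max (@cube_vertex R n) (fun x => - lagr V j x) q /\
  is_max (@cube R n) (fun x => - lagr V j x) q.
Proof.
apply: (is_max_cube (min_vertexP V j)).
  by rewrite lagr_min_vertex cube_min_eq opprK.
by move=> x /(cube_min_le_lagr V j); rewrite cube_min_eq lerNl.
Qed.

Lemma lagr_cube_bounds x : cube x -> forall j, - q <= lagr V j x <= 1.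
Proof.
move=> x_cube j; rewrite -(cube_min_eq j) -(cube_max_eq1 j).
by rewrite cube_min_le_lagr // lagr_le_cube_max.
Qed.

(* (iv): λ_j(1/2,...,1/2) = (1 - q)/2 = 1/(n+1) = λ_j(c(S)) for every j. *)
Lemma simplex_center_half : simplex_center V = const_mx 2^-1.
Proof.
rewrite [RHS](lagr_decomp V_unit) /simplex_center scaler_sumr.
apply: eq_bigr => j _; congr (_ *: _).
rewrite -/(@cube_center R n) lagr_cube_center cube_max_eq1 cube_min_eq -natr1.
by field; exact: natr1_neq0.
Qed.

Lemma abs_row_sum (i : 'I_n) : \sum_j `|l (lift ord_max i) j| = 2.
Proof.
under eq_bigr do rewrite abs_pos_neg.
by rewrite big_split /= -row_pos_eq_neg row_pos_eq1.
Qed.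

Lemma pos_col_sum j :
  \sum_(i < n) pos_part (l (lift ord_max i) j) = 1 - l ord_max j.
Proof. by have := cube_max_eq1 j; rewrite /cube_max_val; lra. Qed.

Lemma neg_col_sum j :
  \sum_(i < n) neg_part (l (lift ord_max i) j) = q + l ord_max j.
Proof. by have := cube_min_eq j; rewrite /cube_min_val; lra. Qed.

Lemma abs_col_sum j :
  \sum_(i < n) `|l (lift ord_max i) j| = 2 * n%:R / (n%:R + 1).
Proof.
under eq_bigr do rewrite abs_pos_neg.
rewrite big_split /= pos_col_sum neg_col_sum.
by field; exact: natr1_neq0.
Qed.

Lemma nonneg_col_sum j :
  \sum_(i < n | 0 <= l (lift ord_max i) j) l (lift ord_max i) j = 1 - l ord_max j.
Proof. by rewrite big_mkcond -pos_col_sum. Qed.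

Lemma negative_col_sum j :
  \sum_(i < n | l (lift ord_max i) j < 0) `|l (lift ord_max i) j| = q + l ord_max j.
Proof.
rewrite big_mkcond -neg_col_sum; apply: eq_bigr => i _.
by rewrite /neg_part; case: ifP => // /ltr0_norm.
Qed.

(* (v): as c(S) = c(Q_n), the chain ... ⊂ S ⊂ Q_n ⊂ nS ⊂ ... follows from
   S ⊂ Q_n ⊂ nS by applying homotheties of ratio n^k and n^-(k+1). *)
Lemma homothety_chain (n_gt0 : (0 < n)%N) (k : nat) :
  let cS := homot (simplex_center V) in
  let cQ := homot (@cube_center R n) in
  [/\ psubset (cQ ((n%:R ^+ k.+1)^-1) (@cube R n)) (cS ((n%:R ^+ k)^-1) (simplex V)),
      psubset (cS ((n%:R ^+ k)^-1) (simplex V)) (cQ ((n%:R ^+ k)^-1) (@cube R n)),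
      psubset (cS (n%:R ^+ k) (simplex V)) (cQ (n%:R ^+ k) (@cube R n))
    & psubset (cQ (n%:R ^+ k) (@cube R n)) (cS (n%:R ^+ k.+1) (simplex V))].
Proof.
rewrite /= simplex_center_half -/(@cube_center R n).
have Q_sub_nS' := Q_sub_nS; rewrite simplex_center_half in Q_sub_nS'.
have n_neq0 : n%:R != 0 :> R by rewrite pnatr_eq0 -lt0n.
split; [| exact: homot_sub | exact: homot_sub |].
- have := homot_sub_comp (s := (n%:R ^+ k.+1)^-1) Q_sub_nS'.
  by rewrite exprS invfM mulrAC mulVf ?mul1r.
- by have := homot_sub_comp (s := n%:R ^+ k) Q_sub_nS'; rewrite -exprSr.
Qed.

End InscribedSimplex.

Theorem theorem6p1 (R : realFieldType) (n : nat) (V : 'M[R]_(n.+1, n)) :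
  (0 < n)%N ->
  vertex_matrix V \in unitmx ->
  psubset (simplex V) (@cube R n) ->
  psubset (@cube R n) (homot (simplex_center V) n%:R (simplex V)) ->
  let S := simplex V in
  let Q := @cube R n in
  let cS := homot (simplex_center V) in
  let cQ := homot (@cube_center R n) in
  let l := lcoef V in
  let q := (n%:R - 1) / (n%:R + 1) : R in
  (* (i), (ii) *)
  (forall j, is_max (@cube_vertex R n) (lagr V j) 1) /\
  (forall j, is_max (@cube_vertex R n) (fun x => - lagr V j x) q) /\
  (* (iii) *)
  (forall j, is_max Q (lagr V j) 1) /\
  (forall j, is_max Q (fun x => - lagr V j x) q) /\
  (* (iv) *)
  simplex_center V = const_mx (2^-1) /\ @cube_center R n = const_mx (2^-1) /\
  (* (v) *)
  (forall k : nat,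
     psubset (cQ ((n%:R ^+ k.+1)^-1) Q) (cS ((n%:R ^+ k)^-1) S) /\
     psubset (cS ((n%:R ^+ k)^-1) S) (cQ ((n%:R ^+ k)^-1) Q) /\
     psubset (cS (n%:R ^+ k) S) (cQ (n%:R ^+ k) Q) /\
     psubset (cQ (n%:R ^+ k) Q) (cS (n%:R ^+ k.+1) S)) /\
  (* (vi) *)
  (forall i : 'I_n, \sum_(j < n.+1) `|l (lift ord_max i) j| = 2) /\
  (forall j : 'I_n.+1, \sum_(i < n) `|l (lift ord_max i) j| = 2 * n%:R / (n%:R + 1)) /\
  (* (vii) *)
  (forall j : 'I_n.+1,
     \sum_(i < n | 0 <= l (lift ord_max i) j) l (lift ord_max i) j = 1 - l ord_max j /\
     \sum_(i < n | l (lift ord_max i) j < 0) `|l (lift ord_max i) j| = q + l ord_max j) /\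
  (* (viii) *)
  (forall x, Q x -> forall j, - q <= lagr V j x <= 1).
Proof.
move=> n_gt0 V_unit S_sub_Q Q_sub_nS S Q cS cQ l q.
have max_l := lagr_max V_unit S_sub_Q Q_sub_nS.
have max_neg_l := neg_lagr_max V_unit S_sub_Q Q_sub_nS.
split; first by move=> j; case: (max_l j).
split; first by move=> j; case: (max_neg_l j).
split; first by move=> j; case: (max_l j).
split; first by move=> j; case: (max_neg_l j).
split; first exact: simplex_center_half V_unit S_sub_Q Q_sub_nS.
split; first by [].
split.
  by move=> k; have [] := homothety_chain V_unit S_sub_Q Q_sub_nS n_gt0 k.
split; first exact: abs_row_sum V_unit S_sub_Q Q_sub_nS.
split; first exact: abs_col_sum V_unit S_sub_Q Q_sub_nS.
split.
  move=> j; split; first exact: nonneg_col_sum V_unit S_sub_Q Q_sub_nS j.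
  exact: negative_col_sum V_unit S_sub_Q Q_sub_nS j.
exact: lagr_cube_bounds V_unit S_sub_Q Q_sub_nS.
Qed.
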